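(* Let $k \ge 1$, $m \ge 1$, and let $b(n) = \left\lfloor \frac{(n+1)^2}{8}\right\rfloor$ for $n \ge 0$. The number of odd Grassmannian involutions of $[m]$ that avoid $\operatorname{id}_k = 12\cdots k$ equals $b(m)$ if $m \le k$; equals $b(2k-m)$ if $k < m < 2k$ and $m-k$ is even; equals $b(2k-m-2)$ if $k < m < 2k$ and $m-k$ is odd; and equals $0$ if $m \ge 2k$.
   Context: A permutation is Grassmannian if it has at most one descent; a Grassmannian involution is a Grassmannian permutation $\pi$ with $\pi^{-1}=\pi$; it is odd if it has an odd number of inversions. A permutation avoids $12\cdots k$ if it has no increasing subsequence of length $k$. *)

(* Permutations of [m] are represented by 'S_m (positions and
   values 0..m-1, order-isomorphic to 1..m). *)
From mathcomp Require Import all_boot all_fingroup.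
Set Implicit Arguments. Unset Strict Implicit. Unset Printing Implicit Defensive.

Definition descents (m : nat) (s : 'S_m) : nat :=
  #|[set i : 'I_m | [exists j : 'I_m, (val j == (val i).+1) && (s j < s i)]]|.

Definition grassmannian (m : nat) (s : 'S_m) : bool := descents s <= 1.

Definition involution (m : nat) (s : 'S_m) : bool := (s^-1)%g == s.

Definition inversions (m : nat) (s : 'S_m) : nat :=
  #|[set p : 'I_m * 'I_m | (p.1 < p.2) && (s p.2 < s p.1)]|.

Definition odd_inv (m : nat) (s : 'S_m) : bool := odd (inversions s).

Definition contains_id (k m : nat) (s : 'S_m) : bool :=
  [exists f : {ffun 'I_k -> 'I_m},
     [forall i : 'I_k, forall j : 'I_k,
        (i < j) ==> ((f i < f j) && (s (f i) < s (f j))) ]].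

Definition avoids_id (k m : nat) (s : 'S_m) : bool := ~~ contains_id k s.

Definition count_odd_grass_inv_avoiding (k m : nat) : nat :=
  #|[set s : 'S_m | [&& grassmannian s, involution s, odd_inv s & avoids_id k s]]|.

Definition b (n : nat) : nat := (n.+1 ^ 2) %/ 8.

From mathcomp Require Import all_boot all_fingroup zify.
Set Implicit Arguments. Unset Strict Implicit. Unset Printing Implicit Defensive.

(* A Grassmannian involution of [0, m) is either the identity or the swap of
   two adjacent blocks [a, a + c) and [a + c, a + 2c): its descent splits it
   into two increasing runs, f i >= i on the first and f i <= i on the second,
   and being an involution forces the points moved by the first run to form a
   block sent increasingly onto the next one.  Such a block swap has c^2
   inversions and its longest increasing subsequence has length m - c, so the
   count is the number of pairs (a, c) with c odd, c > m - k and a + 2c <= m,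
   that is the sum over odd c > m - k of m + 1 - 2c, which is b evaluated at
   m - 2e for the least even e >= m - k. *)

Definition swap_blocks (a c i : nat) : nat :=
  if a <= i < a + c then i + c else if a + c <= i < a + c.*2 then i - c else i.

Lemma swap_blocksK a c : involutive (swap_blocks a c).
Proof. by move=> i; rewrite /swap_blocks; do ! case: ifP; lia. Qed.

Lemma swap_blocks0 a : swap_blocks a 0 =1 id.
Proof. by move=> i; rewrite /swap_blocks; do ! case: ifP; lia. Qed.

Lemma swap_blocks_lt a c m i : a + c.*2 <= m -> i < m -> swap_blocks a c i < m.
Proof. by rewrite /swap_blocks; do ! case: ifP; lia. Qed.

Lemma swap_blocks_descent a c i :
  swap_blocks a c i.+1 < swap_blocks a c i -> i.+1 = a + c.
Proof. by rewrite /swap_blocks; do ! case: ifP; lia. Qed.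

Lemma swap_blocks_inversion a c i j : i < j ->
  (swap_blocks a c j < swap_blocks a c i) = (a <= i < a + c) && (a + c <= j < a + c.*2).
Proof. by move=> lt_ij; apply/idP/idP; rewrite /swap_blocks; do ! case: ifP; lia. Qed.

Lemma card_ord_interval N lo hi :
  lo <= hi <= N -> #|[set i : 'I_N | lo <= i < hi]| = hi - lo.
Proof.
move=> bounds; rewrite -sum1dep_card -(big_mkord (fun i => lo <= i < hi) (fun _ => 1)).
rewrite /index_iota subn0 sum1_count.
suff -> : forall n, count (fun i => lo <= i < hi) (iota 0 n) = minn hi n - minn lo n by lia.
elim=> [|n IH]; first by rewrite !minn0.
by rewrite -addn1 iotaD count_cat IH /=; lia.
Qed.

Section BlockSwap.
Variables (m a c : nat).

Definition swap_blocks_ord (i : 'I_m) : 'I_m :=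
  insubd i (if a + c.*2 <= m then swap_blocks a c i else i).

Lemma val_swap_blocks_ord i :
  val (swap_blocks_ord i) = if a + c.*2 <= m then swap_blocks a c i else i.
Proof.
rewrite /swap_blocks_ord; case: ifP => fit; rewrite val_insubd.
  by rewrite swap_blocks_lt.
by rewrite ltn_ord.
Qed.

Lemma swap_blocks_ordK : involutive swap_blocks_ord.
Proof.
move=> i; apply: val_inj; rewrite !val_swap_blocks_ord.
by case: (a + c.*2 <= m); rewrite ?swap_blocksK.
Qed.

Definition block_swap : 'S_m := perm (can_inj swap_blocks_ordK).

Lemma involution_block_swap : involution block_swap.
Proof.
apply/eqP/permP => i; have block_swapK : block_swap (block_swap i) = i.
  by rewrite !permE swap_blocks_ordK.
by rewrite -{1}block_swapK permK.
Qed.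

Hypothesis fit : a + c.*2 <= m.

Lemma block_swapE i : val (block_swap i) = swap_blocks a c i.
Proof. by rewrite permE val_swap_blocks_ord fit. Qed.

Lemma grassmannian_block_swap : grassmannian block_swap.
Proof.
apply/card_le1_eqP => i i'; rewrite !inE.
move=> /existsP[j /andP[/eqP ij desc]] /existsP[j' /andP[/eqP ij' desc']].
move: desc desc'; rewrite !block_swapE ij ij'.
by move=> /swap_blocks_descent di /swap_blocks_descent di'; apply/val_inj/succn_inj; rewrite di di'.
Qed.

Lemma inversions_block_swap : inversions block_swap = c * c.
Proof.
rewrite /inversions.
have -> : [set p : 'I_m * 'I_m | (p.1 < p.2) && (block_swap p.2 < block_swap p.1)]
    = setX [set i : 'I_m | a <= i < a + c] [set j : 'I_m | a + c <= j < a + c.*2].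
  apply/setP => [[i j]]; rewrite !inE /= !block_swapE.
  case: (ltnP i j) => [lt_ij | le_ji] /=; first exact: swap_blocks_inversion.
  by apply/esym/negbTE; lia.
rewrite cardsX !card_ord_interval; [congr (_ * _) | lia..]; lia.
Qed.

Lemma contains_id_block_swap_le k : contains_id k block_swap -> k <= m - c.
Proof.
case/existsP => f /forallP f_incr.
have f_incr2 (i j : 'I_k) : i < j -> (f i < f j) && (swap_blocks a c (f i) < swap_blocks a c (f j)).
  by move=> lt_ij; have := implyP (forallP (f_incr i) j) lt_ij; rewrite !block_swapE.
have f_inj : injective f.
  move=> i j fij; apply/eqP; apply: contraT; rewrite neq_ltn.
  by case/orP=> /f_incr2; rewrite fij ltnn.
set B1 := [set x : 'I_m | a <= x < a + c].
set B2 := [set x : 'I_m | a + c <= x < a + c.*2].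
(* every pair of B1 * B2 is an inversion *)
have not_both (i j : 'I_k) : f i \in B1 -> f j \in B2 -> False.
  rewrite !inE => inB1 inB2; case: (ltngtP i j) => [lt_ij | lt_ji | /val_inj eij].
  - case/andP: (f_incr2 _ _ lt_ij) => lt_f.
    by rewrite ltnNge leq_eqVlt (swap_blocks_inversion _ _ lt_f) inB1 inB2 orbT.
  - by case/andP: (f_incr2 _ _ lt_ji); lia.
  - by move: inB1; rewrite eij; lia.
have [B sub_im cardB] : exists2 B : {set 'I_m}, f @: setT \subset ~: B & #|B| = c.
  case: (boolP [exists i, f i \in B1]) => [/existsP[i fi] | none1].
  - exists B2; last by rewrite card_ord_interval; lia.
    by apply/subsetP => _ /imsetP[j _ ->]; rewrite inE; apply/negP => /(not_both _ _ fi).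
  - exists B1; last by rewrite card_ord_interval; lia.
    apply/subsetP => _ /imsetP[j _ ->]; rewrite inE.
    by move: none1; rewrite negb_exists => /forallP.
have := subset_leq_card sub_im.
by rewrite card_imset // cardsT card_ord cardsCs setCK card_ord cardB.
Qed.

Lemma contains_id_block_swap_ge k : k <= m - c -> contains_id k block_swap.
Proof.
move=> le_k; have le_km : k <= m by lia.
pose skip_block (i : nat) := if i < a + c then i else i + c.
have skip_lt (i : 'I_k) : skip_block i < m.
  by have := ltn_ord i; rewrite /skip_block; case: ifP; lia.
apply/existsP; exists [ffun i : 'I_k => insubd (widen_ord le_km i) (skip_block i)].
apply/forallP => i; apply/forallP => j; apply/implyP => lt_ij.
rewrite !ffunE !block_swapE !val_insubd !skip_lt /skip_block.
by case: (ltnP i (a + c)); case: (ltnP j (a + c)); rewrite /swap_blocks; do ! case: ifP; lia.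
Qed.

Lemma contains_id_block_swap k : contains_id k block_swap = (k <= m - c).
Proof. by apply/idP/idP; [exact: contains_id_block_swap_le | exact: contains_id_block_swap_ge]. Qed.

End BlockSwap.

Lemma increasing_gap (f : nat -> nat) lo hi :
    (forall i, lo <= i < hi -> f i < f i.+1) ->
  forall i j, lo <= i <= j -> j <= hi -> f i + (j - i) <= f j.
Proof.
move=> f_incr i j /andP[le_lo_i le_ij] le_jhi.
elim: j le_ij le_jhi => [|j IH] le_ij le_jhi.
  by move: le_ij; rewrite leqn0 => /eqP ->; rewrite addn0.
case: (ltngtP i j.+1) le_ij => // [lt_ij _ | -> _]; last by rewrite subnn addn0.
by have := IH lt_ij (ltnW le_jhi); have := f_incr j (_ : lo <= j < hi); lia.
Qed.

Section GrassmannianInvolutionShape.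
Variables (n d : nat) (f : nat -> nat).
Hypotheses (f_le : forall i, f i <= n) (fK : forall i, i <= n -> f (f i) = i).
Hypotheses (le_dn : d <= n) (f_incr : forall i, i < n -> i != d -> f i < f i.+1).

Lemma first_run_gap i j : i <= j <= d -> f i + (j - i) <= f j.
Proof.
case/andP=> le_ij le_jd; apply: (increasing_gap (lo := 0) (hi := d)) => // i' ?.
by apply: f_incr; lia.
Qed.

Lemma second_run_gap i j : d < i <= j -> j <= n -> f i + (j - i) <= f j.
Proof.
by move=> lt_d_i; apply: (increasing_gap (lo := d.+1)) => // i' ?; apply: f_incr; lia.
Qed.

Lemma first_run_ge i : i <= d -> i <= f i.
Proof. by move=> le_id; have := first_run_gap (_ : 0 <= i <= d); lia. Qed.

Lemma second_run_le j : d < j <= n -> f j <= j.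
Proof.
case/andP=> lt_dj le_jn.
by have := second_run_gap (_ : d < j <= n) (leqnn n); have := f_le n; lia.
Qed.

Variable a : nat.
Hypotheses (le_an : a <= n) (fa_neq : f a != a) (fix_below : forall i, i < a -> f i = i).

Lemma first_moved_le_descent : a <= d.
Proof.
rewrite leqNgt; apply/negP => lt_da.
have lt_fa_a : f a < a by have := second_run_le (_ : d < a <= n); move: fa_neq; lia.
by move: fa_neq; rewrite -[X in _ != X](fK le_an) (fix_below lt_fa_a) eqxx.
Qed.

Lemma first_moved_image : f a = d.+1.
Proof.
have le_ad := first_moved_le_descent.
have lt_d_fa : d < f a.
  rewrite ltnNge; apply/negP => /first_run_ge; rewrite fK //.
  by have := first_run_ge le_ad; move: fa_neq; lia.
case: (ltngtP (f a) d.+1) => // lt_d1_fa; first lia.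
(* otherwise f (d + 1) < a would be fixed, yet f (f (d + 1)) = d + 1 *)
have := second_run_gap (_ : d < d.+1 <= f a) (f_le a); rewrite fK // => gap.
have le_d1n : d.+1 <= n by have := f_le a; lia.
by have := fK le_d1n; rewrite fix_below; lia.
Qed.

Lemma first_moved_block_left i : a <= i <= d -> f i = i + (d.+1 - a).
Proof.
move=> /andP[le_ai le_id].
have ge_fi : d.+1 + (i - a) <= f i.
  by have := first_run_gap (_ : a <= i <= d); rewrite first_moved_image; lia.
have fd1 : f d.+1 = a by rewrite -first_moved_image fK.
by have := second_run_gap (_ : d < d.+1 <= f i) (f_le i); rewrite fd1 fK; lia.
Qed.

Lemma first_moved_block_right j : d < j <= d + (d.+1 - a) -> f j = j - (d.+1 - a).
Proof.
move=> bounds; have le_ad := first_moved_le_descent.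
have fj := first_moved_block_left (_ : a <= j - (d.+1 - a) <= d).
by rewrite -{1}(_ : f (j - (d.+1 - a)) = j) ?fK; lia.
Qed.

Lemma first_moved_fit : a + (d.+1 - a).*2 <= n.+1.
Proof.
have := first_moved_block_left (_ : a <= d <= d); have := f_le d.
by have := first_moved_le_descent; lia.
Qed.

Lemma first_moved_fix_above j : d + (d.+1 - a) < j <= n -> f j = j.
Proof.
case/andP=> lt_j le_jn; apply/eqP; apply: contraT => fj_neq.
have lt_fj_j : f j < j by have := second_run_le (_ : d < j <= n); move: fj_neq; lia.
have ffj := fK le_jn; have le_fjn := f_le j.
case: (ltnP d (f j)) => [lt_d_fj | le_fj_d].
  by have := second_run_le (_ : d < f j <= n); lia.
case: (ltnP (f j) a) => [/fix_below | le_a_fj]; first lia.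
by have := first_moved_block_left (_ : a <= f j <= d); lia.
Qed.

Lemma first_moved_swap_blocks i : i <= n -> f i = swap_blocks a (d.+1 - a) i.
Proof.
move=> le_in; have le_ad := first_moved_le_descent.
rewrite /swap_blocks; case: ifP => [in_left | /negbT out_left].
  by apply: first_moved_block_left; lia.
case: ifP => [in_right | /negbT out_right].
  by apply: first_moved_block_right; lia.
case: (ltnP i a) => [/fix_below // | le_ai].
by apply: first_moved_fix_above; lia.
Qed.

End GrassmannianInvolutionShape.

Lemma swap_blocks_of_grassmannian_involution n d (f : nat -> nat) :
    (forall i, f i <= n) -> (forall i, i <= n -> f (f i) = i) -> d <= n ->
    (forall i, i < n -> i != d -> f i < f i.+1) ->
  exists a c, a + c.*2 <= n.+1 /\ forall i, i <= n -> f i = swap_blocks a c i.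
Proof.
move=> f_le fK le_dn f_incr.
case: (boolP [exists i : 'I_n.+1, f i != i]) => [/existsP[i0 moved] | /existsPn fixed].
  have [|a /andP[le_an fa_neq] a_min] := ex_minnP (P := fun i => (i <= n) && (f i != i)).
    by exists i0; rewrite moved -ltnS ltn_ord.
  have fix_below i : i < a -> f i = i.
    move=> lt_ia; apply/eqP; apply: contraTT (lt_ia) => fi_neq.
    by rewrite -leqNgt a_min // fi_neq andbT; lia.
  exists a, (d.+1 - a); split; first exact: first_moved_fit fix_below.
  exact: first_moved_swap_blocks.
exists 0, 0; split=> // i le_in; rewrite swap_blocks0.
by have /negPn/eqP := fixed (inord i); rewrite inordK.
Qed.

Lemma grassmannian_single_descent n (s : 'S_n.+1) : grassmannian s ->
  exists2 d, d <= n & forall i, i < n -> i != d -> s (inord i) < s (inord i.+1).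
Proof.
rewrite /grassmannian /descents; set D := [set _ | _] => card_D.
have inD i : i < n -> s (inord i.+1) < s (inord i) -> inord i \in D.
  move=> lt_in desc; rewrite inE; apply/existsP; exists (inord i.+1).
  by rewrite desc andbT /= !inordK //; lia.
have s_neq i : i < n -> s (inord i) != s (inord i.+1) :> nat.
  by move=> lt_in; rewrite (inj_eq val_inj) (inj_eq perm_inj) -(inj_eq val_inj) /= !inordK; lia.
have ascent_off i (x : 'I_n.+1) : i < n -> x \in D -> i != x -> s (inord i) < s (inord i.+1).
  move=> lt_in xD i_neq; rewrite ltn_neqAle s_neq // leqNgt; apply/negP => /(inD _ lt_in) iD.
  have /(congr1 val) := card_le1_eqP card_D _ _ iD xD.
  by rewrite /= inordK; lia.
case: (pickP (mem D)) => [x xD | noD].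
  by exists x => [|i lt_in]; [rewrite -ltnS | exact: ascent_off].
exists 0 => // i lt_in _; rewrite ltn_neqAle s_neq // leqNgt.
by apply/negP => /(inD _ lt_in); rewrite [_ \in _]noD.
Qed.

Lemma grassmannian_involution_block_swap m (s : 'S_m) : grassmannian s -> involution s ->
  exists a c, a + c.*2 <= m /\ s = block_swap m a c.
Proof.
case: m s => [|n] s grass inv; first by exists 0, 0; split=> //; apply/permP => -[].
have sK x : s (s x) = x by have := permK s x; rewrite (eqP inv).
have [d le_dn ascent] := grassmannian_single_descent grass.
pose f i := val (s (inord i)).
have f_le i : f i <= n by rewrite -ltnS ltn_ord.
have fK i : i <= n -> f (f i) = i by move=> le_in; rewrite /f inord_val sK /= inordK.
have [a [c [fit fE]]] := swap_blocks_of_grassmannian_involution f_le fK le_dn ascent.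
exists a, c; split=> //; apply/permP => x; apply: val_inj.
rewrite block_swapE // -fE /f ?inord_val //.
by rewrite -ltnS.
Qed.

Lemma block_swap_inj m a c a' c' : 0 < c -> 0 < c' ->
    a + c.*2 <= m -> a' + c'.*2 <= m ->
  block_swap m a c = block_swap m a' c' -> a = a' /\ c = c'.
Proof.
move=> c_gt0 c'_gt0 fit fit' eq_bs.
have value_at i (lt_im : i < m) : swap_blocks a c i = swap_blocks a' c' i.
  by have := congr1 (fun s : 'S_m => val (s (Ordinal lt_im))) eq_bs; rewrite /= !block_swapE.
have := value_at a (_ : a < m); have := value_at a' (_ : a' < m).
by rewrite /swap_blocks; do ! case: ifP; lia.
Qed.

Lemma odd_grass_inv_avoiding_block_swaps k m :
  [set s : 'S_m | [&& grassmannian s, involution s, odd_inv s & avoids_id k s]]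
  = [set block_swap m p.2 p.1 | p : 'I_m.+1 * 'I_m.+1 in
       [set p : 'I_m.+1 * 'I_m.+1 | odd p.1 && (m < k + p.1) && (p.2 + p.1.*2 <= m)]].
Proof.
apply/setP => s; rewrite inE; apply/idP/imsetP.
  case/and4P => grass inv odd_s avoid.
  have [a [c [fit eq_s]]] := grassmannian_involution_block_swap grass inv.
  exists (inord c, inord a); last by rewrite /= !inordK //; lia.
  move: odd_s avoid; rewrite inE /= !inordK ?eq_s; try lia.
  rewrite /odd_inv /avoids_id inversions_block_swap // contains_id_block_swap //.
  by rewrite oddM andbb => -> /=; lia.
case=> [[c a]]; rewrite inE /= => /andP[/andP[odd_c avoid] fit] ->.
apply/and4P; split; [exact: grassmannian_block_swap | exact: involution_block_swap | |].
  by rewrite /odd_inv inversions_block_swap // oddM odd_c.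
by rewrite /avoids_id contains_id_block_swap // -ltnNge; lia.
Qed.

Lemma count_odd_grass_inv_avoiding_sum k m : count_odd_grass_inv_avoiding k m
  = \sum_(0 <= c < m.+1 | odd c && (m < k + c)) (m.+1 - c.*2).
Proof.
rewrite /count_odd_grass_inv_avoiding odd_grass_inv_avoiding_block_swaps card_in_imset.
  rewrite -sum1dep_card -(pair_big_dep (fun c : 'I_m.+1 => odd c && (m < k + c))
    (fun (c a : 'I_m.+1) => a + (c : nat).*2 <= m) (fun _ _ => 1)) /= big_mkord.
  apply: eq_bigr => c _; rewrite sum1dep_card -[RHS]subn0 -(@card_ord_interval m.+1); last by lia.
  by apply: eq_card => a; rewrite !inE /=; lia.
move=> [c a] [c' a']; rewrite !inE /= => /andP[/andP[odd_c _] fit] /andP[/andP[odd_c' _] fit'].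
have c_gt0 : 0 < c by rewrite lt0n; apply: contraTneq odd_c => ->.
have c'_gt0 : 0 < c' by rewrite lt0n; apply: contraTneq odd_c' => ->.
by case/(block_swap_inj c_gt0 c'_gt0 fit fit') => /val_inj -> /val_inj ->.
Qed.

Lemma sum_odd_sub_double_widen M N : M <= N ->
  \sum_(0 <= c < N | odd c) (M - c.*2) = \sum_(0 <= c < M | odd c) (M - c.*2).
Proof.
move=> le_MN; rewrite (big_cat_nat (leq0n M) le_MN) /=.
rewrite [X in _ + X]big1_seq ?addn0 // => c /andP[_].
by rewrite mem_iota => /andP[le_Mc _]; apply/eqP; rewrite subn_eq0; lia.
Qed.

Lemma sum_odd_sub_double M : \sum_(0 <= c < M | odd c) (M - c.*2) = M ^ 2 %/ 8.
Proof.
elim/ltn_ind: M => M IH; case: (ltnP M 4) => [|le4M].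
  by case: M {IH} => [|[|[|[|]]]] //; rewrite unlock.
have -> : M = (M - 4) + 4 by lia.
set x := M - 4.
rewrite big_mkcond big_ltn; last by lia.
rewrite big_ltn; last by lia.
rewrite /= (big_addn 0 (x + 4) 2) -big_mkcond /=.
(* the term c = 1 is x + 2, and c |-> c + 2 turns the others into the sum for x *)
have -> : \sum_(0 <= c < x + 4 - 2 | odd (c + 2)) (x + 4 - (c + 2).*2)
        = \sum_(0 <= c < x + 4 - 2 | odd c) (x - c.*2).
  by apply: eq_big => [c|c _]; [rewrite oddD addbF | rewrite doubleD; lia].
rewrite sum_odd_sub_double_widen ?IH; [|lia..].
have -> : (x + 4) ^ 2 = x ^ 2 + (x + 2) * 8 by rewrite !expnS !expn0; lia.
by rewrite divnDr ?dvdn_mull // mulnK //; lia.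
Qed.

Lemma sum_odd_sub_double_from M N e : ~~ odd e -> e <= N ->
  \sum_(0 <= c < N | odd c && (e <= c)) (M - c.*2)
    = \sum_(0 <= c < N - e | odd c) (M - e.*2 - c.*2).
Proof.
move=> even_e le_eN; rewrite (big_cat_nat (leq0n e) le_eN) /= big1_seq ?add0n.
  rewrite -{1}(add0n e) big_addn; apply: eq_big => [c|c _].
    by rewrite oddD (negbTE even_e) addbF leq_addl andbT.
  by rewrite doubleD; lia.
by move=> c /andP[/andP[_ le_ec]]; rewrite mem_iota; lia.
Qed.

Lemma count_odd_grass_inv_avoidingE k m :
  count_odd_grass_inv_avoiding k m = b (m - 4 * uphalf (m - k)).
Proof.
rewrite count_odd_grass_inv_avoiding_sum.
set e := (uphalf (m - k)).*2.
rewrite (eq_bigl (fun c => odd c && (e <= c))); last first.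
  by move=> c /=; case: (boolP (odd c)) => //= odd_c; lia.
rewrite sum_odd_sub_double_from ?odd_double; try lia.
rewrite sum_odd_sub_double_widen ?sum_odd_sub_double; try lia.
rewrite /b; have [le_em | lt_me] := leqP e.*2 m; first by congr (_ ^ 2 %/ 8); lia.
have -> : m.+1 - e.*2 = 0 by lia.
by have -> : m - 4 * uphalf (m - k) = 0 by lia.
Qed.

Theorem mainTheorem20 (k m : nat) : 1 <= k -> 1 <= m ->
  [/\ (m <= k -> count_odd_grass_inv_avoiding k m = b m),
      (k < m < 2 * k -> ~~ odd (m - k) -> count_odd_grass_inv_avoiding k m = b (2 * k - m)),
      (k < m < 2 * k -> odd (m - k) -> count_odd_grass_inv_avoiding k m = b (2 * k - m - 2))
    & (2 * k <= m -> count_odd_grass_inv_avoiding k m = 0)].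
Proof.
(* the count formula holds for all k and m *)
move=> _ _; rewrite count_odd_grass_inv_avoidingE.
split=> *; try by congr b; lia.
by have -> : m - 4 * uphalf (m - k) = 0 by lia.
Qed.
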